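(* Let $\mathrm{ocDAG}$ be the set of all ordered connected directed acyclic graphs, and let $\mathrm{ocROUTING} = \{\mathrm{routing}(\vec{G})\}_{\vec{G}\in\mathrm{ocDAG}}$. The unitary router $$\mathrm{router}: \mathrm{ocDAG} \rightarrow \mathrm{ocROUTING},\qquad \vec{G}\mapsto \mathrm{routing}(\vec{G})$$ is a bijection.
   Context: A topological ordering of a directed graph $G=(V,E)$ is a bijection $o: V\to\{1,\dots,|V|\}$ such that for every directed edge $(v_j,v_k)\in E$ one has $o(v_j)<o(v_k)$; a directed graph is acyclic (a DAG) iff it admits a topological ordering. An ordered DAG is a DAG $(V,E)$ with $V=\{1,\dots,|V|\}$ such that the identity map $j\mapsto j$ is a topological ordering. For a DAG $G=(V,E)$ with topological ordering $o$, the induced ordered DAG is $\vec{G}^{(o)} = (\{o(v)\,|\,v\in V\},\{(o(v_j),o(v_k))\,|\,(v_j,v_k)\in E\})$. $\mathrm{ocDAG}$ denotes the set of all ordered and connected DAGs. For a graph $G=(V,E)$ and vertex $v$, the parents are $P_G(v)=\{w\in V\,|\,(w,v)\in E\}$ and the children are $C_G(v)=\{w\in V\,|\,(v,w)\in E\}$. An ECM graph is a connected DAG $G=(V,E)$ whose vertices are partitioned into percepts $\mathcal{S}=\{v\,|\,P_G(v)=\emptyset\}$, actions $\mathcal{A}=\{v\,|\,C_G(v)=\emptyset\}$, and intermediate clips $\mathcal{C}=V\setminus(\mathcal{S}\cup\mathcal{A})$. Given an ECM graph $G=(V,E)$ with topological ordering $o$, a unitary route of $\vec{G}^{(o)}$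 is a sequence of $|V|\times|V|$ unitary matrices $(U^{o(v)})_{v\in\mathcal{C}\cup\mathcal{A}}$, ordered by ascending superscript, whose entries are $U^i_{jk}=u^i_{jk}$ if $j,k\in\{i\}\cup P_{\vec{G}^{(o)}}(i)$ and $U^i_{jk}=\delta_{jk}$ otherwise, where the complex numbers $u^i_{jk}$ are arbitrary subject only to $U^i$ being unitary. The unitary routing $\mathrm{routing}(\vec{G}^{(o)})$ is the set of all unitary routes of $\vec{G}^{(o)}$ (obtained from all admissible choices of the coefficients $u^i_{jk}$). *)

From HB Require Import structures.
From mathcomp Require Import all_boot all_order all_algebra.
From mathcomp Require Import complex.
From mathcomp Require Import Rstruct.
Set Implicit Arguments. Unset Strict Implicit. Unset Printing Implicit Defensive.
Import Order.TTheory GRing.Theory Num.Theory.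
Local Open Scope ring_scope.

Notation Cplx := (Rdefinitions.R)[i].

(* A directed graph on the vertex set {1,...,n} is encoded on 'I_n
   (vertex k+1 of the paper is the ordinal k); E is its set of directed edges. *)
Definition digraph (n : nat) := {set 'I_n * 'I_n}.

(* identity map is a topological ordering: every edge goes upward *)
Definition is_ordered (n : nat) (E : digraph n) : Prop :=
  forall j k : 'I_n, (j, k) \in E -> (j < k)%N.

Definition is_connected (n : nat) (E : digraph n) : Prop :=
  (0 < n)%N /\
  forall j k : 'I_n, connect (fun a b => ((a, b) \in E) || ((b, a) \in E)) j k.

(* ordered (hence acyclic) connected DAGs, of any size *)
Definition ocDAG : Type :=
  { G : {n : nat & digraph n} | is_ordered (projT2 G) /\ is_connected (projT2 G) }.

Definition ocsize (G : ocDAG) : nat := projT1 (proj1_sig G).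
Definition ocedges (G : ocDAG) : digraph (ocsize G) := projT2 (proj1_sig G).

Definition parents (n : nat) (E : digraph n) (v : 'I_n) : {set 'I_n} :=
  [set w | (w, v) \in E].
Definition children (n : nat) (E : digraph n) (v : 'I_n) : {set 'I_n} :=
  [set w | (v, w) \in E].

Definition percepts (n : nat) (E : digraph n) : {set 'I_n} :=
  [set v | parents E v == set0].
Definition actions (n : nat) (E : digraph n) : {set 'I_n} :=
  [set v | children E v == set0].
Definition clips (n : nat) (E : digraph n) : {set 'I_n} :=
  ~: (percepts E :|: actions E).

Definition adjoint (n : nat) (U : 'M[Cplx]_n) : 'M[Cplx]_n :=
  map_mx Num.conj (U^T).
Definition unitary (n : nat) (U : 'M[Cplx]_n) : Prop :=
  U *m adjoint U = 1%:M.

Definition admissible (n : nat) (E : digraph n) (i : 'I_n) (U : 'M[Cplx]_n) : Prop :=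
  unitary U /\
  forall j k : 'I_n,
    ~~ ((j \in i |: parents E i) && (k \in i |: parents E i)) ->
    U j k = (j == k)%:R.

(* A unitary route is a finite sequence of square complex matrices, all of one
   size m; the size is recorded so that routes of different graphs live in
   one common type. *)
Definition Route : Type := {m : nat & seq 'M[Cplx]_m}.

Definition route_indices (n : nat) (E : digraph n) : seq 'I_n :=
  [seq i <- enum 'I_n | i \in clips E :|: actions E].

Definition routing_of (n : nat) (E : digraph n) : Route -> Prop :=
  fun r => exists Us : 'I_n -> 'M[Cplx]_n,
      (forall i, i \in clips E :|: actions E -> admissible E i (Us i)) /\
      r = existT (fun m => seq 'M[Cplx]_m) n [seq Us i | i <- route_indices E].

Definition routing (G : ocDAG) : Route -> Prop := routing_of (ocedges G).

Definition ocROUTING : Type := { R : Route -> Prop | exists G : ocDAG, R = routing G }.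

Definition router (G : ocDAG) : ocROUTING :=
  exist (fun R => exists G : ocDAG, R = routing G) (routing G) (ex_intro _ G erefl).

(** A unitary route of an ordered DAG remembers the graph.  Its length is the
    number of non-percepts, and at position t the diagonal entry (j, j) can be
    moved away from 1 (by a sign flip, which is unitary) exactly when
    j ∈ {i_t} ∪ P(i_t).  So routing(G) determines the sequence of supports
    S_t = {i_t} ∪ P(i_t).  As parents precede their children, i_t is the
    largest vertex of S_t and the edges into i_t are the pairs (p, max S_t)
    with p ∈ S_t \ {i_t}; every edge target is a non-percept, hence some i_t. *)
From mathcomp Require Import all_boot all_order all_algebra.
From mathcomp Require Import complex Rstruct.
From Stdlib Require Import Eqdep_dec ProofIrrelevance ClassicalEpsilon.
Set Implicit Arguments. Unset Strict Implicit. Unset Printing Implicit Defensive.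
Import Order.TTheory GRing.Theory Num.Theory.
Local Open Scope ring_scope.

Lemma adjoint_diag_mx n (d : 'rV[Cplx]_n) :
  adjoint (diag_mx d) = diag_mx (map_mx Num.conj d).
Proof. by rewrite /adjoint tr_diag_mx map_diag_mx. Qed.

Lemma unitary_diag_mx n (d : 'rV[Cplx]_n) :
  (forall k, d 0 k * (d 0 k)^* = 1) -> unitary (diag_mx d).
Proof.
move=> d_unit; rewrite /unitary adjoint_diag_mx mulmx_diag -diag_const_mx.
by congr diag_mx; apply/matrixP => i k; rewrite !mxE d_unit.
Qed.

Definition sign_mx n (A : {set 'I_n}) : 'M[Cplx]_n :=
  diag_mx (\row_k (if k \in A then -1 else 1)).

Lemma sign_mxE n (A : {set 'I_n}) j k :
  sign_mx A j k = (if j \in A then -1 else 1) *+ (j == k).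
Proof. by rewrite !mxE. Qed.

Lemma unitary_sign_mx n (A : {set 'I_n}) : unitary (sign_mx A).
Proof.
apply: unitary_diag_mx => k; rewrite mxE.
by case: ifP; rewrite ?conjCN1 ?conjC1 ?mulrNN mulr1.
Qed.

Lemma admissible_sign_mx n (E : digraph n) i (A : {set 'I_n}) :
  A \subset i |: parents E i -> admissible E i (sign_mx A).
Proof.
move=> sub_A; split=> [|j k]; first exact: unitary_sign_mx.
rewrite sign_mxE; case: (eqVneq j k) => [<-|_]; last by rewrite !mulr0n.
rewrite andbb => j_out; case: ifP => [/(subsetP sub_A) j_in|_] //.
by rewrite j_in in j_out.
Qed.

Lemma mem_route_indices n (E : digraph n) p i :
  (p, i) \in E -> i \in route_indices E.
Proof.
move=> e_pi; rewrite mem_filter mem_enum andbT !inE negb_or.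
case: (boolP (children E i == set0)) => [|_]; rewrite ?orbT // andbT orbF.
by apply/negP => /eqP/setP/(_ p); rewrite !inE e_pi.
Qed.

Definition route_supports n (E : digraph n) : seq {set 'I_n} :=
  [seq i |: parents E i | i <- route_indices E].

Lemma routing_of_trivial_route n (E : digraph n) :
  routing_of E (existT _ n [seq sign_mx set0 | _ <- route_indices E]).
Proof.
by exists (fun=> sign_mx set0); split=> // i _; apply/admissible_sign_mx/sub0set.
Qed.

Definition diag_movable (R : Route -> Prop) n t (j : 'I_n) : Prop :=
  exists s, R (existT _ n s) /\ (nth 1%:M s t) j j != 1.

Lemma diag_movableP n (E : digraph n) t j :
  diag_movable (routing_of E) t j <-> j \in nth set0 (route_supports E) t.
Proof.
split=> [[s [[Us [Us_adm /(inj_pair2_eq_dec _ PeanoNat.Nat.eq_dec _ _ _ _) ->]]]]|].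
- case: (ltnP t (size (route_indices E))) => [t_lt|t_ge]; last first.
    by rewrite nth_default ?size_map // mxE eqxx mulr1n eqxx.
  rewrite (nth_map j) // (nth_map j) //; set i := nth j _ t.
  have i_idx : i \in clips E :|: actions E.
    by have := mem_nth j t_lt; rewrite mem_filter => /andP[].
  have [_ Ui_delta] := Us_adm i i_idx.
  by apply: contraR => j_out; rewrite Ui_delta ?andbb // eqxx.
- case: (ltnP t (size (route_indices E))) => [t_lt|t_ge]; last first.
    by rewrite nth_default ?size_map ?inE.
  rewrite (nth_map j) // => j_in.
  pose Us i := sign_mx ([set j] :&: (i |: parents E i)).
  exists [seq Us i | i <- route_indices E]; split.
    by exists Us; split=> // i _; apply/admissible_sign_mx/subsetIr.
  rewrite (nth_map j) // sign_mxE in_setI set11 j_in eqxx mulr1n.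
  by rewrite eq_sym -addr_eq0 -mulr2n pnatr_eq0.
Qed.

Lemma routing_of_route_supports n (E1 E2 : digraph n) :
  routing_of E1 = routing_of E2 -> route_supports E1 = route_supports E2.
Proof.
move=> eq_routing; apply: (@eq_from_nth _ set0) => [|t _].
  have := routing_of_trivial_route E1; rewrite eq_routing => -[Us [_]].
  move/(inj_pair2_eq_dec _ PeanoNat.Nat.eq_dec _ _ _ _)/(congr1 size).
  by rewrite !size_map.
apply/setP => j; apply/idP/idP => /diag_movableP.
  by rewrite eq_routing => /diag_movableP.
by rewrite -eq_routing => /diag_movableP.
Qed.

Definition support_edge n (S : {set 'I_n}) (p i : 'I_n) : bool :=
  [&& p \in S, i \in S, (p < i)%N & [forall k in S, (k <= i)%N]].

Lemma ordered_edgeE n (E : digraph n) : is_ordered E ->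
  forall p i, ((p, i) \in E) = has (fun S => support_edge S p i) (route_supports E).
Proof.
move=> E_ord p i; apply/idP/hasP => [e_pi|[_ /mapP[i' _ ->]]].
  exists (i |: parents E i); first exact/map_f/(mem_route_indices e_pi).
  rewrite /support_edge !inE eqxx e_pi E_ord //= orbT; apply/forall_inP => k.
  by rewrite !inE => /orP[/eqP->|/E_ord/ltnW].
rewrite /support_edge !inE => /and4P[p_in i_in p_lt /forall_inP i_top].
have i'_le : (i' <= i)%N by apply: i_top; rewrite !inE eqxx.
have eq_i : i' = i.
  case/orP: i_in => [/eqP//|/E_ord i_lt].
  by have := leq_trans i_lt i'_le; rewrite ltnn.
subst i'; case/orP: p_in => [/eqP p_eq|//].
by move: p_lt; rewrite p_eq ltnn.
Qed.

Lemma ordered_route_supports_inj n (E1 E2 : digraph n) :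
  is_ordered E1 -> is_ordered E2 -> route_supports E1 = route_supports E2 -> E1 = E2.
Proof.
move=> E1_ord E2_ord eq_supports; apply/setP => -[p i].
by rewrite ordered_edgeE // ordered_edgeE // eq_supports.
Qed.

Lemma routing_inj : injective routing.
Proof.
move=> [[n1 E1] [E1_ord E1_conn]] [[n2 E2] [E2_ord E2_conn]].
rewrite /routing /ocedges /= => eq_routing.
have eq_n : n1 = n2.
  have := routing_of_trivial_route E1; rewrite eq_routing => -[Us [_]].
  by move/(congr1 (@projT1 _ _)).
subst n2.
have eq_E : E1 = E2.
  exact: ordered_route_supports_inj E1_ord E2_ord (routing_of_route_supports eq_routing).
subst E2; congr exist; exact: proof_irrelevance.
Qed.

Lemma bijective_corestriction (A B : Type) (f : A -> B) : injective f ->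
  bijective (fun a => exist (fun b => exists a', b = f a') (f a) (ex_intro _ a erefl)).
Proof.
move=> f_inj.
pose g (b : {b | exists a, b = f a}) :=
  proj1_sig (constructive_indefinite_description _ (proj2_sig b)).
exists g => [a|[b b_im]]; rewrite /g /=.
  by case: constructive_indefinite_description => a' /= /f_inj.
case: constructive_indefinite_description => a' /= b_eq; subst b.
by congr exist; exact: proof_irrelevance.
Qed.

Theorem lemma1 : bijective router.
Proof. exact: bijective_corestriction routing_inj. Qed.
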